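(* Let $(Q,\mathcal S)$ be a hypergraph with $Q=\{q_1,\dots,q_m\}$ and $\mathcal S=\{S_1,\dots,S_n\}$, where $n\ge 2$, every $S_j$ is a nonempty subset of $Q$, and $S_n=Q$. Let $G'$ be the graph constructed from $(Q,\mathcal S)$ as follows. Its vertex set consists of the vertices $q_1,\dots,q_m$; vertices $S_1,\dots,S_n$; vertices $S_1',\dots,S_n'$; a vertex $q^i_j$ for every pair $(i,j)$ with $q_i\in S_j$ (let $Q'$ be the set of these); and vertices $u_1,v,w,x$. Its edges are: $q^i_jq_i$ and $q^i_jS_j$ for every $q^i_j\in Q'$; $q_iS_j'$ whenever $q_i\in S_j$; $S_jS_k'$ for all $j,k\in\{1,\dots,n\}$; $u_1S_j$ for every $j$; $u_1v$; $wS_j'$ for every $j$; and $xv$, $xw$. Then $(Q,\mathcal S)$ has a $2$-colouring if and only if $G'$ contains the cycle $C_6$ on six vertices as a contraction.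
   Context: A $2$-colouring of a hypergraph $(Q,\mathcal S)$ is a partition $(Q_1,Q_2)$ of $Q$ such that $Q_1\cap S\neq\emptyset$ and $Q_2\cap S\neq\emptyset$ for every $S\in\mathcal S$. Contracting an edge $uv$ means deleting $u$ and $v$ and adding a new vertex adjacent to $(N(u)\cup N(v))\setminus\{u,v\}$ (no multiple edges or loops). A graph contains $H$ as a contraction if $H$ can be obtained from it by a sequence of edge contractions. *)

From HB Require Import structures.
From mathcomp Require Import all_boot.
Set Implicit Arguments. Unset Strict Implicit. Unset Printing Implicit Defensive.

Record sgraph := SGraph {
  svert : finType;
  sadj : rel svert;
  sadj_sym : symmetric sadj;
  sadj_irr : irreflexive sadj }.

(* Contraction of the edge uv: v is deleted and u plays the role of the
   new vertex, adjacent to (N(u) \cup N(v)) \ {u,v}; no loops/multi-edges. *)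
Section Contract.
Variables (G : sgraph) (u v : svert G).
Definition cvert : finType := {x : svert G | x != v}.
Definition cadj (x y : cvert) : bool :=
  (val x != val y) &&
  [|| @sadj G (val x) (val y),
      (val x == u) && @sadj G v (val y) |
      (val y == u) && @sadj G v (val x)].
Lemma cadj_sym : symmetric cadj.
Proof.
move=> x y; rewrite /cadj eq_sym (@sadj_sym G (val x)); congr (_ && _).
by congr (_ || _); rewrite orbC.
Qed.
Lemma cadj_irr : irreflexive cadj.
Proof. by move=> x; rewrite /cadj eqxx. Qed.
Definition contract : sgraph := SGraph cadj_sym cadj_irr.
End Contract.

Definition sg_iso (G H : sgraph) : Prop :=
  exists f : svert G -> svert H,
    bijective f /\ forall x y, @sadj H (f x) (f y) = @sadj G x y.

Inductive has_contraction : sgraph -> sgraph -> Prop :=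
| hc_iso G H : sg_iso G H -> has_contraction G H
| hc_step G H (u v : svert G) :
    @sadj G u v -> has_contraction (contract u v) H -> has_contraction G H.

Definition c6adj (i j : 'I_6) : bool :=
  ((i.+1 %% 6)%N == j) || ((j.+1 %% 6)%N == i).
Lemma c6adj_sym : symmetric c6adj.
Proof. by move=> i j; rewrite /c6adj orbC. Qed.
Lemma c6adj_irr : irreflexive c6adj.
Proof. by case=> [[|[|[|[|[|[|i]]]]]] Hi] //. Qed.
Definition C6 : sgraph := SGraph c6adj_sym c6adj_irr.

Definition two_colouring m n (S : 'I_n -> {set 'I_m}) (Q1 Q2 : {set 'I_m}) :=
  [/\ Q1 :|: Q2 = setT, Q1 :&: Q2 = set0 &
      forall j, Q1 :&: S j != set0 /\ Q2 :&: S j != set0].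
Definition has_two_colouring m n (S : 'I_n -> {set 'I_m}) :=
  exists Q1 Q2, two_colouring S Q1 Q2.

Inductive ext := EU | EV | EW | EX.
Definition ext_to (e : ext) : 'I_4 :=
  match e with EU => inord 0 | EV => inord 1 | EW => inord 2 | EX => inord 3 end.
Definition ext_of (i : 'I_4) : ext :=
  match val i with 0 => EU | 1 => EV | 2 => EW | _ => EX end.
Lemma ext_toK : cancel ext_to ext_of.
Proof. by case; rewrite /ext_of /= inordK. Qed.
HB.instance Definition _ := Finite.copy ext (can_type ext_toK).

Section Gprime.
Variables (m n : nat) (S : 'I_n -> {set 'I_m}).

Definition qpair : finType := {p : 'I_m * 'I_n | p.1 \in S p.2}.

(* vertices: q_i | S_j | S'_j | q^i_j | u_1, v, w, x *)
Definition gvert : finType := ((('I_m + 'I_n) + ('I_n + qpair)) + ext)%type.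

Definition dedge (a b : gvert) : bool :=
  match a, b with
  | inl (inr (inr p)), inl (inl (inl i)) => (val p).1 == i      (* q^i_j q_i *)
  | inl (inr (inr p)), inl (inl (inr j)) => (val p).2 == j      (* q^i_j S_j *)
  | inl (inl (inl i)), inl (inr (inl j)) => i \in S j           (* q_i S'_j *)
  | inl (inl (inr j)), inl (inr (inl k)) => true                (* S_j S'_k *)
  | inr EU, inl (inl (inr j)) => true                           (* u_1 S_j *)
  | inr EU, inr EV => true                                      (* u_1 v *)
  | inr EW, inl (inr (inl j)) => true                           (* w S'_j *)
  | inr EX, inr EV => true                                      (* x v *)
  | inr EX, inr EW => true                                      (* x w *)
  | _, _ => false
  end.

Definition gadj (a b : gvert) : bool := dedge a b || dedge b a.
Lemma gadj_sym : symmetric gadj.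
Proof. by move=> a b; rewrite /gadj orbC. Qed.
Lemma gadj_irr : irreflexive gadj.
Proof. by move=> a; rewrite /gadj orbb; case: a => [[[i|j]|[j|p]]|[]]. Qed.
Definition Gprime : sgraph := SGraph gadj_sym gadj_irr.
End Gprime.

(* Contractions of G to H are the surjections f from the vertices of G onto those
   of H whose fibres are connected and whose quotient graph is H.
   Given a 2-colouring (Q1, Q2), the map sending x, v, u to 0, 1, 2, w to 5, the
   S_j, the q^i_j and Q1 to 3, and the S'_j and Q2 to 4 is such a map onto C6: the
   fibres of 3 and 4 are connected through S_n = Q because every S_j meets both
   colours.
   Conversely, let f be such a map onto C6.  The S_j are all adjacent to all the
   S'_k and to u, the S'_k to w, and every vertex of C6 is the image of u, v, x, w
   or is adjacent or equal to the image of some S_j or S'_j.  As the antipode of a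
   vertex of C6 is at distance 3 from it, this forces all S_j onto one vertex a and
   all S'_j onto one vertex b, with a <> b, f u <> a and f w <> b.  The fibre of a
   then leaves S_j and its q^i_j only through an edge q^i_j q_i with f q_i = a, and
   the fibre of b leaves S'_j only through some q_i with q_i in S_j and f q_i = b,
   so that the preimage of a in Q and its complement 2-colour the hypergraph. *)

From HB Require Import structures.
From mathcomp Require Import all_boot.
Set Implicit Arguments. Unset Strict Implicit. Unset Printing Implicit Defensive.

Lemma connect_homo (T U : finType) (e : rel T) (e' : rel U) (h : T -> U) :
  (forall a b, e a b -> connect e' (h a) (h b)) ->
  forall a b, connect e a b -> connect e' (h a) (h b).
Proof.
move=> eh a _ /connectP[p + ->]; elim: p a => [|c p IHp] a /=; first by move=> _.
by case/andP=> /eh ac /IHp; apply: connect_trans.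
Qed.

Lemma connect_exit (T : finType) (e : rel T) (P : pred T) x y :
  connect e x y -> P x -> ~~ P y ->
  exists y1 y2, [/\ connect e x y1, P y1, ~~ P y2 & e y1 y2].
Proof.
move=> /connectP[p + ->]; elim: p x => [|c p IHp] x /=; first by move=> _ ->.
case/andP=> exc /IHp {}IHp Px Py; case Pc: (P c).
  have [y1 [y2 [cy1 ? ? ?]]] := IHp Pc Py.
  by exists y1, y2; split=> //; exact: connect_trans (connect1 exc) cy1.
by exists x, c; rewrite Pc; split.
Qed.

Lemma subsingleton_set1 (T : finType) (A : {set T}) a :
  a \in A -> {in A &, forall x y, x = y} -> A = [set a].
Proof.
move=> Aa A1; apply/setP=> x; rewrite inE.
by apply/idP/eqP=> [Ax | ->] //; exact: A1.
Qed.

Section Fibres.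
Variables (G : sgraph) (T : eqType) (f : svert G -> T).

Definition fibre_adj : rel (svert G) := fun x y => sadj x y && (f x == f y).

Lemma fibre_adj_sym : symmetric fibre_adj.
Proof. by move=> x y; rewrite /fibre_adj sadj_sym eq_sym. Qed.

Lemma connect_fibre_sym : connect_sym fibre_adj.
Proof. exact: sym_connect_sym fibre_adj_sym. Qed.

Lemma connect_fibre_eq x y : connect fibre_adj x y -> f x = f y.
Proof.
move=> /connectP[p + ->]; elim: p x => //= z p IHp x.
by case/andP=> /andP[_ /eqP ->] /IHp.
Qed.

End Fibres.
Arguments fibre_adj {G T} f.

Section ContractionMap.
Variables (G H : sgraph) (f : svert G -> svert H).

(* The fibres of [f] are the witness sets of a contraction of [G] to [H]. *)
Record contraction_map : Prop := ContractionMap {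
  cmap_surj : forall h, exists x, f x = h;
  cmap_fibre : forall x y, f x = f y -> connect (fibre_adj f) x y;
  cmap_adj : forall x y, sadj x y -> f x != f y -> sadj (f x) (f y);
  cmap_lift : forall h h', sadj h h' ->
    exists x y, [/\ f x = h, f y = h' & sadj x y] }.

End ContractionMap.

Section ContractEdge.
Variables (G : sgraph) (u v : svert G).
Hypothesis huv : sadj u v.

Lemma sadj_neq : u != v.
Proof. by apply: contraTneq huv => ->; rewrite sadj_irr. Qed.

Definition contract_proj (x : svert G) : svert (contract u v) :=
  insubd (Sub u sadj_neq : svert (contract u v)) x.

Lemma val_contract_proj x : val (contract_proj x) = if x == v then u else x.
Proof. by rewrite val_insubd; case: eqVneq. Qed.

Lemma contract_projK : cancel val contract_proj.
Proof. exact: valKd. Qed.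

Lemma contract_proj_adj x y :
  sadj x y -> contract_proj x != contract_proj y ->
  @sadj (contract u v) (contract_proj x) (contract_proj y).
Proof.
move=> xy ne; rewrite /= /cadj (inj_eq val_inj) ne /= !val_contract_proj.
case: (eqVneq x v) xy ne => [-> | _]; case: (eqVneq y v) => [-> | _] //= xy.
- by rewrite eqxx.
- by rewrite eqxx xy orbT.
- by rewrite eqxx [sadj v x]sadj_sym xy !orbT.
- by rewrite xy.
Qed.

Lemma contract_adj_lift (a b : svert (contract u v)) : sadj a b ->
  exists x y, [/\ contract_proj x = a, contract_proj y = b & sadj x y].
Proof.
rewrite /= /cadj => /andP[_ /or3P[ab | /andP[/eqP au vb] | /andP[/eqP bu va]]].
- by exists (val a), (val b); rewrite !contract_projK.
- exists v, (val b); rewrite contract_projK; split=> //.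
  by apply: val_inj; rewrite val_contract_proj eqxx.
- exists (val a), v; rewrite contract_projK sadj_sym; split=> //.
  by apply: val_inj; rewrite val_contract_proj eqxx.
Qed.

Lemma card_contract : #|svert (contract u v)| = #|svert G|.-1.
Proof. by rewrite /= /cvert card_sig -(cardC1 v); apply: eq_card. Qed.

Section ContractFibre.
Variables (T : eqType) (f : svert G -> T).
Hypothesis fuv : f u = f v.

Lemma contract_proj_fibre x : f (val (contract_proj x)) = f x.
Proof. by rewrite val_contract_proj; case: eqP => [->|]. Qed.

Lemma connect_contract_proj x : connect (fibre_adj f) x (val (contract_proj x)).
Proof.
rewrite val_contract_proj; case: eqVneq => [-> | _]; last exact: connect0.
by apply: connect1; rewrite /fibre_adj sadj_sym huv fuv eqxx.
Qed.

End ContractFibre.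
End ContractEdge.

Lemma iso_cmap (G H : sgraph) :
  sg_iso G H -> exists f : svert G -> svert H, contraction_map f.
Proof.
case=> f [[g fK gK] fadj]; exists f; split.
- by move=> h; exists (g h).
- by move=> x y /(can_inj fK) ->; exact: connect0.
- by move=> x y xy _; rewrite fadj.
- by move=> h h' hh'; exists (g h), (g h'); rewrite -fadj !gK.
Qed.

Lemma cmap_contract (G H : sgraph) (u v : svert G) (huv : sadj u v)
    (g : svert (contract u v) -> svert H) :
  contraction_map g -> contraction_map (g \o contract_proj huv).
Proof.
case=> gsurj gfibre gadj glift; set f := g \o _.
have fval a : f (val a) = g a by rewrite /f /= contract_projK.
have fuv : f u = f v.
  rewrite /f /=; congr g; apply: val_inj.
  by rewrite !val_contract_proj eqxx (negbTE (sadj_neq huv)).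
have to_proj x : connect (fibre_adj f) x (val (contract_proj huv x)).
  exact: connect_contract_proj.
have lift_fibre a b : fibre_adj g a b -> connect (fibre_adj f) (val a) (val b).
  case/andP=> /(contract_adj_lift huv)[x [y [<- <- xy]]] gxy.
  apply: connect_trans (connect_trans _ (to_proj y)); first by rewrite connect_fibre_sym.
  by apply: connect1; rewrite /fibre_adj xy.
split.
- by move=> h; have [a <-] := gsurj h; exists (val a).
- move=> x y; rewrite {1}/f /= => /gfibre /(connect_homo lift_fibre) pxy.
  by apply: connect_trans (to_proj x) (connect_trans pxy _); rewrite connect_fibre_sym.
- move=> x y xy fxy; apply: gadj (fxy); apply: contract_proj_adj xy _.
  by apply: contraNneq fxy; rewrite /f /= => ->.
- move=> h h' /glift[a [b [<- <- /(contract_adj_lift huv)[x [y [<- <- xy]]]]]].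
  by exists x, y.
Qed.

Lemma has_contraction_cmap (G H : sgraph) :
  has_contraction G H -> exists f : svert G -> svert H, contraction_map f.
Proof.
elim=> {G H} [G H /iso_cmap // | G H u v huv _ [g /(cmap_contract huv) fmap]].
by exists (g \o contract_proj huv).
Qed.

Lemma cmap_iso (G H : sgraph) (f : svert G -> svert H) :
  contraction_map f -> injective f -> sg_iso G H.
Proof.
case=> fsurj _ fadj flift finj; exists f.
have [g fK] : exists g, cancel g f.
  have ex h : exists x, f x == h by have [x <-] := fsurj h; exists x.
  by exists (fun h => xchoose (ex h)) => h; apply/eqP/(xchooseP (ex h)).
split; first by exists g => // x; apply: finj; rewrite fK.
move=> x y; apply/idP/idP => [/flift[x' [y' [/finj -> /finj ->]]] // | xy].
by apply: fadj (xy) _; rewrite (inj_eq finj); apply: contraTneq xy => ->; rewrite sadj_irr.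
Qed.

Lemma cmap_uncontract (G H : sgraph) (f : svert G -> svert H) x y :
  contraction_map f -> x != y -> f x = f y ->
  exists u v (huv : sadj u v), contraction_map (fun a : svert (contract u v) => f (val a)).
Proof.
case=> fsurj ffibre fadj flift nexy /ffibre fxy.
have ney : ~~ pred1 x y by rewrite /= eq_sym.
have [? [v [_ /eqP-> _ /andP[xv /eqP fxv]]]] :=
  connect_exit (P := pred1 x) fxy (eqxx x) ney.
exists x, v, xv; set g := fun a => _.
have gproj z : g (contract_proj xv z) = f z by exact: contract_proj_fibre.
split.
- by move=> h; have [z <-] := fsurj h; exists (contract_proj xv z).
- move=> a b /ffibre fab; rewrite -(contract_projK xv a) -(contract_projK xv b).
  apply: connect_homo fab => p q /andP[pq /eqP fpq].
  have [-> | ne] := eqVneq (contract_proj xv p) (contract_proj xv q); first exact: connect0.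
  by apply: connect1; rewrite /fibre_adj contract_proj_adj // !gproj fpq eqxx.
- move=> a b /(contract_adj_lift xv)[p [q [<- <- pq]]]; rewrite !gproj; exact: fadj.
- move=> h h' hh'; have [p [q [fp fq pq]]] := flift _ _ hh'.
  exists (contract_proj xv p), (contract_proj xv q); rewrite !gproj; split=> //.
  apply: contract_proj_adj pq _; apply: contraTneq hh' => pq_eq.
  by rewrite -fp -fq -(gproj p) -(gproj q) pq_eq sadj_irr.
Qed.

Lemma cmap_has_contraction (G H : sgraph) (f : svert G -> svert H) :
  contraction_map f -> has_contraction G H.
Proof.
move: {2}#|svert G| (leqnn #|svert G|) => N.
elim: N G f => [|N IHN] G f cardG fmap.
  apply: hc_iso (cmap_iso fmap _) => x.
  by move: cardG; rewrite leqn0 => /eqP/card0_eq/(_ x); rewrite inE.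
have [/injectiveP finj | /injectivePn[x [y nexy fxy]]] := boolP (injectiveb f).
  exact: hc_iso (cmap_iso fmap finj).
have [u [v [huv gmap]]] := cmap_uncontract fmap nexy fxy.
apply: hc_step huv (IHN _ _ _ gmap).
by rewrite card_contract -subn1 leq_subLR add1n.
Qed.

Lemma has_contractionP (G H : sgraph) :
  has_contraction G H <-> exists f : svert G -> svert H, contraction_map f.
Proof.
split; first exact: has_contraction_cmap.
by case=> f; exact: cmap_has_contraction.
Qed.

Lemma cmap_fibre_exit (G H : sgraph) (f : svert G -> svert H) (P : pred (svert G)) x y :
  contraction_map f -> f x = f y -> P x -> ~~ P y ->
  exists y1 y2, [/\ P y1, ~~ P y2, sadj y1 y2, f y1 = f x & f y2 = f x].
Proof.
move=> fmap /(cmap_fibre fmap) xy Px Py.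
have [y1 [y2 [/connect_fibre_eq xy1 Py1 Py2 /andP[y12 /eqP fy12]]]] :=
  connect_exit xy Px Py.
by exists y1, y2; rewrite -fy12 xy1.
Qed.

Definition c6near (a b : 'I_6) : bool := (a == b) || c6adj a b.
Definition c6anti (a : 'I_6) : 'I_6 := Ordinal (ltn_pmod (a + 3) (isT : 0 < 6)).

Lemma c6near_refl : reflexive c6near.
Proof. by move=> a; rewrite /c6near eqxx. Qed.

Lemma c6near_sym : symmetric c6near.
Proof. by move=> a b; rewrite /c6near eq_sym c6adj_sym. Qed.

Lemma cmap_near (G : sgraph) (f : svert G -> 'I_6) x y :
  contraction_map (H := C6) f -> sadj x y -> c6near (f x) (f y).
Proof. by move=> fmap xy; rewrite /c6near; case: eqVneq => //= /(cmap_adj fmap xy). Qed.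

Ltac c6_cases a := case: a => [[|[|[|[|[|[|?]]]]]] ?] //.

Lemma c6near_anti p y z : c6near p y -> c6near y z -> c6anti p != z.
Proof. by c6_cases p; c6_cases y; c6_cases z. Qed.

Lemma c6antiK : involutive c6anti.
Proof. by move=> a; c6_cases a; apply: val_inj. Qed.

Lemma c6adj_common a1 a2 b d : a1 != a2 -> c6adj a1 b -> c6adj a2 b ->
  c6near a1 d -> c6near a2 d -> d = b.
Proof. by c6_cases a1; c6_cases a2; c6_cases b; c6_cases d; move=> *; apply: val_inj. Qed.

(* [A] and [B] stand for the images of the S_j and of the S'_j, and [u], [v], [x],
   [w] for those of the vertices of the same names. *)
Section C6Configuration.
Variables (A B : {set 'I_6}) (u v x w : 'I_6).
Hypotheses (nearAB : {in A & B, forall a b, c6near a b})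
  (nearuA : {in A, forall a, c6near u a}) (nearwB : {in B, forall b, c6near w b})
  (near_uv : c6near u v) (near_wx : c6near w x)
  (cover : forall k, k \in [:: u; v; x; w] \/ exists2 d, d \in A :|: B & c6near d k).

Lemma c6anti_eq_x p y : {in A :|: B, forall d, c6near p d} ->
  c6near p u -> c6near p y -> c6near y w -> c6anti p = x.
Proof.
move=> nearp pu py yw; case: (cover (c6anti p)) => [|[d /nearp pd]]; last first.
  by move/(c6near_anti pd); rewrite eqxx.
rewrite !inE (negbTE (c6near_anti pu (c6near_refl u))).
by rewrite (negbTE (c6near_anti pu near_uv)) (negbTE (c6near_anti py yw)) orbF => /eqP.
Qed.

Lemma c6adj_AB : {in A & B, forall a b, c6adj a b}.
Proof.
move=> a b Aa Bb; move: (nearAB Aa Bb); rewrite /c6near; case: eqVneq => //= eq_ab.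
subst b; have aw : c6near a w by rewrite c6near_sym nearwB.
have /eqP[] := c6near_anti aw near_wx.
apply: (c6anti_eq_x _ _ aw (c6near_refl w)); last by rewrite c6near_sym nearuA.
by move=> d /setUP[Ad | Bd]; [rewrite c6near_sym nearAB | rewrite nearAB].
Qed.

Lemma A_subsingleton : B != set0 -> {in A &, forall a1 a2 : 'I_6, a1 = a2}.
Proof.
case/set0Pn=> b Bb a1 a2 A1 A2; apply/eqP/negPn/negP => ne12.
have common := c6adj_common ne12 (c6adj_AB A1 Bb) (c6adj_AB A2 Bb).
have ub : u = b by apply: common; rewrite c6near_sym nearuA.
have bw : c6near b w by rewrite c6near_sym nearwB.
have /eqP[] := c6near_anti bw near_wx.
apply: (c6anti_eq_x _ _ bw (c6near_refl w)); last by rewrite ub c6near_refl.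
move=> d /setUP[Ad | Bd]; first by rewrite c6near_sym nearAB.
by rewrite (common d) ?c6near_refl // /c6near c6adj_AB ?orbT.
Qed.

Lemma u_notin_A : {in B &, forall b1 b2 : 'I_6, b1 = b2} -> B != set0 -> u \notin A.
Proof.
move=> B1 /set0Pn[b Bb]; apply/negP=> Au.
have ub : c6near u b by rewrite nearAB.
have bw : c6near b w by rewrite c6near_sym nearwB.
have xu : c6anti u = x.
  apply: (c6anti_eq_x _ (c6near_refl u) ub bw).
  by move=> d /setUP[Ad | Bd]; [exact: nearuA | exact: nearAB].
have xb : c6anti b = x.
  apply: (c6anti_eq_x _ _ (c6near_refl b) bw); last by rewrite c6near_sym.
  move=> d /setUP[Ad | Bd]; first by rewrite c6near_sym nearAB.
  by rewrite (B1 d b) ?c6near_refl.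
by move: (c6adj_AB Au Bb); rewrite -(c6antiK u) xu -xb c6antiK c6adj_irr.
Qed.

End C6Configuration.

Lemma c6_configuration A B u v x w :
  A != set0 -> B != set0 -> {in A & B, forall a b, c6near a b} ->
  {in A, forall a, c6near u a} -> {in B, forall b, c6near w b} ->
  c6near u v -> c6near w x ->
  (forall k, k \in [:: u; v; x; w] \/ exists2 d, d \in A :|: B & c6near d k) ->
  exists a b, [/\ A = [set a], B = [set b], a != b, u != a & w != b].
Proof.
move=> A0 B0 nearAB nearuA nearwB uv wx cover.
have nearBA : {in B & A, forall b a, c6near b a}.
  by move=> b a Bb Aa; rewrite c6near_sym nearAB.
have coverBA k : k \in [:: w; x; v; u] \/ exists2 d, d \in B :|: A & c6near d k.
  by rewrite -[[:: w; x; v; u]]/(rev [:: u; v; x; w]) mem_rev setUC.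
have A1 := A_subsingleton nearAB nearuA nearwB uv wx cover B0.
have B1 := A_subsingleton nearBA nearwB nearuA wx uv coverBA A0.
have [[a Aa] [b Bb]] := (set0Pn _ A0, set0Pn _ B0).
exists a, b; split; try exact: subsingleton_set1.
- have := c6adj_AB nearAB nearuA nearwB uv wx cover Aa Bb.
  by apply: contraTneq => ->; rewrite c6adj_irr.
- by apply: contraNneq (u_notin_A nearAB nearuA nearwB uv wx cover B1 B0) => ->.
- by apply: contraNneq (u_notin_A nearBA nearwB nearuA wx uv coverBA A1 A0) => ->.
Qed.

Section GprimeVertices.
Variables (m n : nat) (S : 'I_n -> {set 'I_m}).

Definition qv i : gvert S := inl (inl (inl i)).
Definition Sv j : gvert S := inl (inl (inr j)).
Definition Sv' j : gvert S := inl (inr (inl j)).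
Definition qSv p : gvert S := inl (inr (inr p)).
Definition ev e : gvert S := inr e.
Definition incidence i j (iS : i \in S j) : qpair S := exist _ (i, j) iS.

Variables (jT : 'I_n).
Hypothesis SjT : S jT = setT.

Lemma in_SjT i : i \in S jT.
Proof. by rewrite SjT inE. Qed.

Definition cycle_vertex (h : 'I_6) : gvert S :=
  match val h with
  | 0 => ev EX | 1 => ev EV | 2 => ev EU | 3 => Sv jT | 4 => Sv' jT | _ => ev EW
  end.

Lemma cycle_vertex_adj h h' : c6adj h h' -> gadj (cycle_vertex h) (cycle_vertex h').
Proof. by case: h => [[|[|[|[|[|[|?]]]]]] ?]; case: h' => [[|[|[|[|[|[|?]]]]]] ?]. Qed.

Section Colouring.
Variables Q1 Q2 : {set 'I_m}.
Hypothesis col : two_colouring S Q1 Q2.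

Definition colour_map (y : gvert S) : 'I_6 :=
  match y with
  | inl (inl (inl i)) => if i \in Q1 then Ordinal (isT : 3 < 6) else Ordinal (isT : 4 < 6)
  | inl (inl (inr _)) | inl (inr (inr _)) => Ordinal (isT : 3 < 6)
  | inl (inr (inl _)) => Ordinal (isT : 4 < 6)
  | inr EU => Ordinal (isT : 2 < 6)
  | inr EV => Ordinal (isT : 1 < 6)
  | inr EW => Ordinal (isT : 5 < 6)
  | inr EX => Ordinal (isT : 0 < 6)
  end.

Lemma colour_cycle_vertex h : colour_map (cycle_vertex h) = h.
Proof. by apply: val_inj; case: h => [[|[|[|[|[|[|?]]]]]] ?]. Qed.

Let R := @fibre_adj (Gprime S) _ colour_map.

Lemma connect_cycle_vertex y : connect R y (cycle_vertex (colour_map y)).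
Proof.
case: col => _ Q12 SQ.
have q_cycle i : connect R (qv i) (cycle_vertex (colour_map (qv i))).
  rewrite /=; case Q1i: (i \in Q1).
    apply: (@connect_trans _ _ (qSv (incidence (in_SjT i)))); apply: connect1;
    by rewrite /R /fibre_adj /= /gadj /= ?Q1i ?eqxx.
  by apply: connect1; rewrite /R /fibre_adj /= /gadj /= Q1i in_SjT.
have S_cycle j : connect R (Sv j) (cycle_vertex (colour_map (Sv j))).
  have [/set0Pn[i]] := SQ j; rewrite inE => /andP[Q1i iS] _.
  apply: (@connect_trans _ _ (qSv (incidence iS))).
    by apply: connect1; rewrite /R /fibre_adj /= /gadj /= !eqxx.
  apply: (@connect_trans _ _ (qv i)); last by have := q_cycle i; rewrite /= Q1i.
  by apply: connect1; rewrite /R /fibre_adj /= /gadj /= Q1i !eqxx.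
case: y => [[[i|j]|[j|p]]|e]; [exact: q_cycle | exact: S_cycle | | | by case: e].
- have [_ /set0Pn[i]] := SQ j; rewrite inE => /andP[Q2i iS].
  have Q1i : i \notin Q1 by apply/negP => Q1i; have := in_set0 i; rewrite -Q12 inE Q1i Q2i.
  apply: (@connect_trans _ _ (qv i)); last by have := q_cycle i; rewrite /= (negbTE Q1i).
  by apply: connect1; rewrite /R /fibre_adj /= /gadj /= iS (negbTE Q1i).
- apply: connect_trans (S_cycle (val p).2).
  by apply: connect1; rewrite /R /fibre_adj /= /gadj /= !eqxx.
Qed.

Lemma colour_cmap : contraction_map (G := Gprime S) (H := C6) colour_map.
Proof.
split.
- by move=> h; exists (cycle_vertex h); exact: colour_cycle_vertex.
- move=> x y fxy; apply: connect_trans (connect_cycle_vertex x) _.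
  by rewrite connect_fibre_sym fxy; exact: connect_cycle_vertex.
- case=> [[[i|j]|[j|p]]|[]]; case=> [[[i'|j']|[j'|p']]|[]] //=;
  rewrite /gadj /= ?orbF //; repeat case: (_ \in Q1) => //.
- move=> h h' hh'; exists (cycle_vertex h), (cycle_vertex h').
  by rewrite !colour_cycle_vertex; split=> //; exact: cycle_vertex_adj.
Qed.

End Colouring.

Definition S_star j (y : gvert S) : bool :=
  match y with
  | inl (inl (inr k)) => k == j
  | inl (inr (inr p)) => (val p).2 == j
  | _ => false
  end.

Section Decolouring.
Variables (f : gvert S -> 'I_6) (a b : 'I_6).
Hypotheses (fmap : contraction_map (G := Gprime S) (H := C6) f)
  (fSa : forall j, f (Sv j) = a) (fS'b : forall j, f (Sv' j) = b)
  (neab : a != b) (fua : f (ev EU) != a) (fwb : f (ev EW) != b).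

Lemma hyperedge_meets_a j j' : j' != j -> exists2 i, i \in S j & f (qv i) = a.
Proof.
move=> nej; have fjj' : f (Sv j) = f (Sv j') by rewrite !fSa.
have [y1 [y2 []]] := cmap_fibre_exit fmap fjj' (eqxx j : S_star j (Sv j)) nej.
rewrite fSa.
case: y1 => [[[i|k]|[k|p]]|e] //= /eqP <-; case: y2 => [[[i|k']|[k'|p']]|[]] //=;
  rewrite /gadj /= ?orbF.
- by move=> _ _ _; rewrite -/(Sv' k') fS'b => /eqP; rewrite eq_sym (negbTE neab).
- by move/negbTE->.
- by move=> _ _ _ /eqP; rewrite (negbTE fua).
- by move=> _ /eqP <- _ fia; exists (val p).1; first exact: (valP p).
- by rewrite eq_sym => /negbTE->.
Qed.

Lemma hyperedge_meets_b j j' : j' != j -> exists2 i, i \in S j & f (qv i) = b.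
Proof.
move=> nej; have fjj' : f (Sv' j) = f (Sv' j') by rewrite !fS'b.
have nej' : Sv' j' != Sv' j by apply: contra nej => /eqP[->].
have [_ [y2 [/eqP-> + + _]]] :=
  @cmap_fibre_exit (Gprime S) C6 f (fun y => y == Sv' j) _ _ fmap fjj' (eqxx _) nej'.
rewrite fS'b; case: y2 => [[[i|k]|[k|p]]|[]] //=; rewrite /gadj /= ?orbF.
- by move=> _ iS fib; exists i.
- by move=> _ _; rewrite -/(Sv k) fSa => /eqP; rewrite (negbTE neab).
- by move=> _ _ /eqP; rewrite (negbTE fwb).
Qed.

End Decolouring.

Lemma cmap_two_colouring (f : gvert S -> 'I_6) :
  1 < n -> contraction_map (G := Gprime S) (H := C6) f -> has_two_colouring S.
Proof.
move=> n2 fmap; have fnear y z : gadj y z -> c6near (f y) (f z) := cmap_near fmap.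
pose A := [set f (Sv j) | j : 'I_n]; pose B := [set f (Sv' j) | j : 'I_n].
have [a [b [eA eB neab fua fwb]]] :
    exists a b, [/\ A = [set a], B = [set b], a != b, f (ev EU) != a & f (ev EW) != b].
  apply: (c6_configuration (v := f (ev EV)) (x := f (ev EX))).
  - by apply/set0Pn; exists (f (Sv jT)); exact: imset_f.
  - by apply/set0Pn; exists (f (Sv' jT)); exact: imset_f.
  - by move=> _ _ /imsetP[j _ ->] /imsetP[k _ ->]; exact: fnear.
  - by move=> _ /imsetP[j _ ->]; exact: fnear.
  - by move=> _ /imsetP[j _ ->]; exact: fnear.
  - exact: fnear.
  - exact: fnear.
  move=> k; have [y <-] := cmap_surj fmap k.
  case: y => [[[i|j]|[j|p]]|[]]; try by left; rewrite !inE eqxx ?orbT.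
  - right; exists (f (Sv' jT)); first by rewrite inE imset_f ?orbT.
    by rewrite c6near_sym; apply: fnear; rewrite /gadj /= in_SjT.
  - by right; exists (f (Sv j)); rewrite ?c6near_refl // inE imset_f.
  - by right; exists (f (Sv' j)); rewrite ?c6near_refl // inE imset_f ?orbT.
  - right; exists (f (Sv (val p).2)); first by rewrite inE imset_f.
    by apply: fnear; rewrite /gadj /= eqxx.
have fSa j : f (Sv j) = a by apply/set1P; rewrite -eA; exact: imset_f.
have fS'b j : f (Sv' j) = b by apply/set1P; rewrite -eB; exact: imset_f.
have other (j : 'I_n) : exists j', j' != j.
  have : 0 < #|[set~ j]| by rewrite cardsC1 card_ord -subn1 subn_gt0.
  by case/card_gt0P=> j'; rewrite in_setC1; exists j'.
exists [set i | f (qv i) == a], (~: [set i | f (qv i) == a]).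
split=> [|| j]; [exact: setUCr | exact: setICr | have [j' nej] := other j].
split; apply/set0Pn.
- have [i iS fia] := hyperedge_meets_a fmap fSa fS'b neab fua nej.
  by exists i; rewrite !inE fia eqxx.
- have [i iS fib] := hyperedge_meets_b fmap fSa fS'b neab fwb nej.
  by exists i; rewrite !inE fib eq_sym neab.
Qed.
End GprimeVertices.

Theorem lemma6 (m n : nat) (S : 'I_n -> {set 'I_m}) :
  (2 <= n)%N ->
  injective S ->
  (forall j, S j != set0) ->
  (forall j : 'I_n, nat_of_ord j = n.-1 -> S j = setT) ->
  has_two_colouring S <-> has_contraction (Gprime S) C6.
Proof.
move=> n2 _ _ Slast.
have ltT : n.-1 < n by rewrite ltn_predL ltnW.
have SjT : S (Ordinal ltT) = setT by exact: Slast.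
split=> [[Q1 [Q2 col]] | /has_contractionP[f fmap]].
  by apply/has_contractionP; exists (colour_map Q1); exact: (colour_cmap SjT col).
exact: (cmap_two_colouring SjT n2 fmap).
Qed.
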